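(* Let $M$ be a duplicial module in a pre-additive category. Then $b_n\pi_n=\pi_{n-1}b_n$ for all $n\ge1$ and $d_n\pi_n=\pi_{n+1}d_n$ for all $n\ge0$.
   Context: Let $\mathcal A$ be a pre-additive category. Let $\Lambda_+$ be the category with objects $[n]$, $n\ge0$, where $\Lambda_+([m],[n])$ is the set of weakly monotone $f:\mathbb Z\to\mathbb Z$ with $f(j+m+1)=f(j)+n+1$ for all $j$ and $f(0)\ge0$. Define $\varepsilon^n_i:[n-1]\to[n]$ ($n\ge1$, $0\le i\le n$) by $\varepsilon^n_i(j)=j$ for $0\le j<i$, $j+1$ for $i\le j\le n-1$, and $\eta^n_i:[n+1]\to[n]$ ($0\le i\le n+1$) by $\eta^n_i(j)=j$ for $0\le j\le i$, $j-1$ for $i<j\le n+1$. A duplicial module is a functor $M:\Lambda_+^{op}\to\mathcal A$; $M_n=M([n])$, $\partial_{n,i}=M(\varepsilon^n_i):M_n\to M_{n-1}$, $s_{n,i}=M(\eta^n_i):M_n\to M_{n+1}$. Convention $M_{-1}=0$, maps into/out of it zero. Define $b_n=\sum_{i=0}^n(-1)^i\partial_{n,i}$ ($b_0=0$), $d_n=\sum_{i=0}^{n+1}(-1)^is_{n,i}$, the Karoubi operator $\kappa_n=(-1)^n(\partial_{n+1,0}s_{n,n+1}-s_{n-1,n}\partial_{n,0})$ (so $\kappa_0=\partial_{1,0}s_{0,1}$), and the Dwyer–Kan operator $\pi_n=(-1)^n\partial_{n+1,0}\kappa_{n+1}^n s_{n,n+1}$. *)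

From mathcomp Require Import all_boot all_order all_algebra.
Set Implicit Arguments. Unset Strict Implicit. Unset Printing Implicit Defensive.
Import Order.TTheory GRing.Theory Num.Theory.
Local Open Scope ring_scope.

Record preadditive := PreAdditive {
  Obj : Type;
  Hom : Obj -> Obj -> zmodType;
  hcomp : forall a b c : Obj, Hom b c -> Hom a b -> Hom a c;
  idm : forall a : Obj, Hom a a;
  hcompA : forall a b c d (f : Hom c d) (g : Hom b c) (h : Hom a b),
      hcomp f (hcomp g h) = hcomp (hcomp f g) h;
  hcomp1m : forall a b (f : Hom a b), hcomp (idm b) f = f;
  hcompm1 : forall a b (f : Hom a b), hcomp f (idm a) = f;
  hcompDl : forall a b c (f g : Hom b c) (h : Hom a b),
      hcomp (f + g) h = hcomp f h + hcomp g h;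
  hcompDr : forall a b c (f : Hom b c) (g h : Hom a b),
      hcomp f (g + h) = hcomp f g + hcomp f h
}.
Arguments hcomp {p a b c}.
Arguments idm {p}.

(* Morphisms [m] -> [n] of Lambda_+ : weakly monotone f : Z -> Z with
   f (j + m + 1) = f j + n + 1 and f 0 >= 0. *)
Definition is_lam (m n : nat) (f : int -> int) : Prop :=
  [/\ (forall x y : int, x <= y -> f x <= f y),
      (forall j : int, f (j + (m.+1)%:Z) = f j + (n.+1)%:Z)
    & 0 <= f 0].

(* A duplicial module M : Lambda_+^op -> C.  The action is given on all
   functions Z -> Z (values on non-morphisms are irrelevant junk); the functor
   laws are required on the morphisms of Lambda_+. *)
Record duplicial (C : preadditive) := Duplicial {
  ob : nat -> Obj C;
  act : forall m n : nat, (int -> int) -> Hom (ob n) (ob m);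
  act_id : forall n : nat, act n n id = idm (ob n);
  act_comp : forall (l m n : nat) (f g : int -> int),
      is_lam l m f -> is_lam m n g ->
      act l n (g \o f) = hcomp (act l m f) (act m n g)
}.

(* epsilon^n_i : [n-1] -> [n], extended periodically to Z. *)
Definition eps (n i : nat) (j : int) : int :=
  let q := (j %/ n%:Z)%Z in let r := (j %% n%:Z)%Z in
  q * (n.+1)%:Z + (if r < i%:Z then r else r + 1).

(* eta^n_i : [n+1] -> [n], extended periodically to Z. *)
Definition eta (n i : nat) (j : int) : int :=
  let q := (j %/ (n.+2)%:Z)%Z in let r := (j %% (n.+2)%:Z)%Z in
  q * (n.+1)%:Z + (if r <= i%:Z then r else r - 1).

Section Ops.
Variables (C : preadditive) (M : duplicial C).

(* face n i = partial_{n+1,i} : M_{n+1} -> M_n *)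
Definition face (n i : nat) : Hom (ob M n.+1) (ob M n) := act M n n.+1 (eps n.+1 i).
Definition degen (n i : nat) : Hom (ob M n) (ob M n.+1) := act M n.+1 n (eta n i).

(* bnd n = b_{n+1} : M_{n+1} -> M_n *)
Definition bnd (n : nat) : Hom (ob M n.+1) (ob M n) :=
  \sum_(i < n.+2) (face n i *~ ((-1) ^+ i)).
Definition dd (n : nat) : Hom (ob M n) (ob M n.+1) :=
  \sum_(i < n.+2) (degen n i *~ ((-1) ^+ i)).

(* Karoubi operator kappa_n (with the convention M_{-1} = 0 for n = 0). *)
Definition kappa (n : nat) : Hom (ob M n) (ob M n) :=
  match n as n0 return Hom (ob M n0) (ob M n0) with
  | 0 => hcomp (face 0 0) (degen 0 1)
  | k.+1 => (hcomp (face k.+1 0) (degen k.+1 k.+2)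
             - hcomp (degen k k.+1) (face k 0)) *~ ((-1) ^+ k.+1)
  end.

Definition kappa_pow (n k : nat) : Hom (ob M n) (ob M n) :=
  iter k (fun f => hcomp (kappa n) f) (idm (ob M n)).

Definition dk_pi (n : nat) : Hom (ob M n) (ob M n) :=
  hcomp (face n 0) (hcomp (kappa_pow n.+1 n) (degen n n.+1)) *~ ((-1) ^+ n).
End Ops.

From Pilot Require Import Defs.
From HB Require Import structures.
From mathcomp Require Import all_boot all_order all_algebra zify.
From Stdlib Require Import FunctionalExtensionality.
Set Implicit Arguments. Unset Strict Implicit. Unset Printing Implicit Defensive.
Import Order.TTheory GRing.Theory Num.Theory.
Import Defs.
Local Open Scope ring_scope.

(* The face and degeneracy identities of [Lambda_+] make [b] and [d] square to
   zero and give [b d + d b = 1 - kappa], so [kappa] commutes with [b] and [d].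
   They also give [face_i kappa = - kappa face_(i+1)], [kappa s_(j+1) = - s_j kappa],
   [face_(n+1) kappa = 0] and [kappa s_0 = 0]; pushing [kappa^n] through [d_n]
   and then the faces of [b_n] with these rules yields
   [pi_n = kappa^n - b kappa^n d].  Hence [b pi_(n+1) = kappa^(n+1) b = pi_n b]
   and [d pi_n = kappa^(n+1) d = pi_(n+1) d]. *)

Definition periodic (p : nat) (q : int) (F : int -> int) (x : int) : int :=
  (x %/ p%:Z)%Z * q + F (x %% p%:Z)%Z.

Lemma epsE n i : eps n i = periodic n (n.+1)%:Z (fun r => if r < i%:Z then r else r + 1).
Proof. by []. Qed.

Lemma etaE n i : eta n i = periodic n.+2 (n.+1)%:Z (fun r => if r <= i%:Z then r else r - 1).
Proof. by []. Qed.

Section Periodic.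
Variables (p : nat) (q : int) (F : int -> int).
Hypothesis p_gt0 : (0 < p)%N.

Lemma periodicMD k x : periodic p q F (k * p%:Z + x) = k * q + periodic p q F x.
Proof. rewrite /periodic divzMDl ?modzMDl ?mulrDl ?addrA //; lia. Qed.

Lemma periodic_small r : 0 <= r < p%:Z -> periodic p q F r = F r.
Proof. by move=> r_rng; rewrite /periodic divz_small ?modz_small ?mul0r ?add0r. Qed.

Lemma periodic_twoperiods v : 0 <= v < p%:Z + p%:Z ->
  periodic p q F v = if v < p%:Z then F v else q + F (v - p%:Z).
Proof.
move=> /andP[v_ge0 v_lt]; case: ifP => v_small; first by rewrite periodic_small ?v_ge0.
rewrite [in LHS](_ : v = 1 * p%:Z + (v - p%:Z)); last by lia.
by rewrite periodicMD mul1r periodic_small //; move/negbT: v_small; lia.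
Qed.

Lemma modz_range x : 0 <= (x %% p%:Z)%Z < p%:Z.
Proof. by rewrite modz_ge0 ?ltz_pmod //; lia. Qed.

Lemma periodic_mono : 0 <= q ->
  (forall u v, 0 <= u -> u <= v -> v < p%:Z -> F u <= F v) ->
  F (p%:Z - 1) <= F 0 + q -> {homo periodic p q F : x y / x <= y}.
Proof.
move=> q_ge0 F_mono F_wrap x y le_xy; rewrite /periodic.
have ex := divz_eq x p%:Z; have ey := divz_eq y p%:Z.
have /andP[r_ge0 r_lt] := modz_range x; have /andP[s_ge0 s_lt] := modz_range y.
move: (x %/ _)%Z (x %% _)%Z (y %/ _)%Z (y %% _)%Z ex ey r_ge0 r_lt s_ge0 s_lt.
move=> k r l s ex ey r_ge0 r_lt s_ge0 s_lt.
have le_kl : k <= l by nia.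
have [eq_kl|ne_kl] := eqVneq k l.
  by rewrite eq_kl lerD2l; apply: F_mono => //; nia.
have Fr_le : F r <= F (p%:Z - 1) by apply: F_mono => //; lia.
have Fs_ge : F 0 <= F s by apply: F_mono => //; lia.
nia.
Qed.

End Periodic.

Lemma periodic_id p : (0 < p)%N -> periodic p p%:Z id = id.
Proof. by move=> p_gt0; apply: functional_extensionality => x; rewrite /periodic -divz_eq. Qed.

Lemma periodic_comp p1 p2 q2 F G x : (0 < p2)%N ->
  periodic p2 q2 G (periodic p1 p2%:Z F x) =
  (x %/ p1%:Z)%Z * q2 + periodic p2 q2 G (F (x %% p1%:Z)%Z).
Proof. by move=> p2_gt0; rewrite {1}/periodic; apply: periodicMD. Qed.

Lemma is_lam_periodic m n F :
  (forall u v, 0 <= u -> u <= v -> v < (m.+1)%:Z -> F u <= F v) ->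
  F m%:Z <= F 0 + (n.+1)%:Z -> 0 <= F 0 -> is_lam m n (periodic m.+1 (n.+1)%:Z F).
Proof.
move=> F_mono F_wrap F0_ge0; split.
- by apply: periodic_mono => //; rewrite (_ : (m.+1)%:Z - 1 = m%:Z) //; lia.
- by move=> j; rewrite addrC -[X in X + j]mul1r periodicMD // mul1r addrC.
- by rewrite periodic_small.
Qed.

Ltac case_if := match goal with |- context[if ?c then _ else _] => case: (boolP c) => ? end.
Ltac unfold_periodic := match goal with |- context[periodic ?p ?q ?G ?v] =>
  rewrite (@periodic_twoperiods p q G _ v); [ | lia | lia] end.

(* Both sides commute with the shift by one period, so it suffices to compare
   them on a period, where they are explicit piecewise affine maps. *)
Ltac lam_ext := apply: functional_extensionality => ?; rewrite /comp !periodic_comp //;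
  congr (_ + _);
  match goal with |- context [(?x %% Posz ?p)%Z] =>
    have /andP[] := @modz_range p isT x; move: (x %% _)%Z => ? ? ? end;
  cbv beta; repeat (first [case_if | unfold_periodic | progress cbv beta]); lia.

Lemma is_lam_eps n i : is_lam n n.+1 (eps n.+1 i).
Proof. by rewrite epsE; apply: is_lam_periodic => [u v *|*|]; repeat case_if; lia. Qed.

Lemma is_lam_eta n i : is_lam n.+1 n (eta n i).
Proof. by rewrite etaE; apply: is_lam_periodic => [u v *|*|]; repeat case_if; lia. Qed.

Lemma eps_eps n i j : (i <= j <= n.+1)%N ->
  eps n.+2 j.+1 \o eps n.+1 i = eps n.+2 i \o eps n.+1 j.
Proof. by move=> ?; rewrite !epsE; lam_ext. Qed.

Lemma eta_eta n i j : (i <= j <= n.+1)%N ->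
  eta n i \o eta n.+1 j.+1 = eta n j \o eta n.+1 i.
Proof. by move=> ?; rewrite !etaE; lam_ext. Qed.

Lemma eta_eps_le n i j : (i <= j <= n.+1)%N -> ~~ ((i == 0) && (j == n.+1))%N ->
  eta n.+1 j.+1 \o eps n.+2 i = eps n.+1 i \o eta n j.
Proof. by move=> ? ?; rewrite !etaE !epsE; lam_ext. Qed.

Lemma eta_eps_gt n i j : (j < i <= n.+1)%N ->
  eta n.+1 j \o eps n.+2 i.+1 = eps n.+1 i \o eta n j.
Proof. by move=> ?; rewrite !etaE !epsE; lam_ext. Qed.

Lemma eta_eps_id n j : (j <= n.+1)%N -> eta n j \o eps n.+1 j = id.
Proof. by move=> ?; rewrite -(@periodic_id n.+1) // !etaE !epsE; lam_ext. Qed.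

Lemma eta_epsS_id n j : (j <= n)%N -> eta n j \o eps n.+1 j.+1 = id.
Proof. by move=> ?; rewrite -(@periodic_id n.+1) // !etaE !epsE; lam_ext. Qed.

Section Preadditive.
Variables (C : preadditive) (a b c : Obj C).

Lemma hcomp0l (g : Hom a b) : hcomp (0 : Hom b c) g = 0.
Proof. by apply: (@addrI _ (hcomp 0 g)); rewrite -hcompDl !addr0. Qed.

Lemma hcomp0r (f : Hom b c) : hcomp f (0 : Hom a b) = 0.
Proof. by apply: (@addrI _ (hcomp f 0)); rewrite -hcompDr !addr0. Qed.

Definition precomp (g : Hom a b) (f : Hom b c) := hcomp f g.
Definition postcomp (f : Hom b c) (g : Hom a b) := hcomp f g.

HB.instance Definition _ g := GRing.isNmodMorphism.Build _ _ (precomp g)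
  (hcomp0l g, fun f f' => hcompDl f f' g).
HB.instance Definition _ f := GRing.isNmodMorphism.Build _ _ (postcomp f)
  (hcomp0r f, hcompDr f).

Lemma hcompBl (f f' : Hom b c) (g : Hom a b) : hcomp (f - f') g = hcomp f g - hcomp f' g.
Proof. exact: (raddfB (precomp g)). Qed.

Lemma hcompBr (f : Hom b c) (g g' : Hom a b) : hcomp f (g - g') = hcomp f g - hcomp f g'.
Proof. exact: (raddfB (postcomp f)). Qed.

Lemma hcompNl (f : Hom b c) (g : Hom a b) : hcomp (- f) g = - hcomp f g.
Proof. exact: (raddfN (precomp g)). Qed.

Lemma hcompMzl (f : Hom b c) (g : Hom a b) z : hcomp (f *~ z) g = hcomp f g *~ z.
Proof. exact: (raddfMz (precomp g)). Qed.

Lemma hcompMzr (f : Hom b c) (g : Hom a b) z : hcomp f (g *~ z) = hcomp f g *~ z.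
Proof. exact: (raddfMz (postcomp f)). Qed.

Lemma hcomp_suml I (r : seq I) (P : pred I) (F : I -> Hom b c) (g : Hom a b) :
  hcomp (\sum_(i <- r | P i) F i) g = \sum_(i <- r | P i) hcomp (F i) g.
Proof. exact: (raddf_sum (precomp g)). Qed.

Lemma hcomp_sumr I (r : seq I) (P : pred I) (F : I -> Hom a b) (f : Hom b c) :
  hcomp f (\sum_(i <- r | P i) F i) = \sum_(i <- r | P i) hcomp f (F i).
Proof. exact: (raddf_sum (postcomp f)). Qed.

End Preadditive.

Section SignedSums.
Variable V : zmodType.
Implicit Types x : V.

Lemma mulrz_signS x k : x *~ (-1) ^+ k.+1 = - (x *~ (-1) ^+ k).
Proof. by rewrite exprS mulN1r mulrNz. Qed.

Lemma mulrz_signD x k l : x *~ (-1) ^+ k *~ (-1) ^+ l = x *~ (-1) ^+ (l + k).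
Proof. by rewrite -mulrzA exprD mulrC. Qed.

Lemma mulrz_sign2 x k : x *~ (-1) ^+ k *~ (-1) ^+ k = x.
Proof. by rewrite -mulrzA -expr2 sqrr_sign mulr1z. Qed.

(* The cancellation behind [b b = 0]: the terms with [i <= j] are matched with
   those with [j < i] by [A i j.+1 = A j i], with opposite signs. *)
Lemma signed_sum_simplicial_eq0 N (A : nat -> nat -> V) :
  (forall i j, (i <= j <= N)%N -> A i j.+1 = A j i) ->
  \sum_(0 <= i < N.+1) \sum_(0 <= j < N.+2) A i j *~ (-1) ^+ (i + j) = 0.
Proof.
elim: N => [|m IHm] A_sym.
  by rewrite !big_nat1 big_nat_recr //= big_nat1 A_sym // mulrz_signS addrN.
rewrite big_nat_recr //=.
under eq_bigr => i _ do rewrite big_nat_recr //=.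
rewrite big_split /= IHm => [|i j ?]; last by apply: A_sym; lia.
rewrite add0r (big_nat_recr m.+2) //= (big_nat_recr m.+1) //= (A_sym m.+1 m.+1) ?leqnn //.
have -> : \sum_(0 <= i < m.+1) A i m.+2 *~ (-1) ^+ (i + m.+2) =
          - \sum_(0 <= i < m.+1) A m.+1 i *~ (-1) ^+ (m.+1 + i).
  rewrite -sumrN; apply: eq_big_nat => i i_lt.
  by rewrite A_sym 1?addnC ?addnS ?mulrz_signS //; lia.
by rewrite [(m.+1 + m.+2)%N]addnS mulrz_signS addrK addNr.
Qed.

(* The cancellation behind [b d + d b = 1 - kappa]: [X] collects the terms
   [face_i degen_j] and [Y] the terms [degen_j face_i]. *)
Lemma signed_sum_homotopy_eq0 N (X Y : nat -> nat -> V) :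
  (forall i, (i <= N)%N -> X i i = X i.+1 i) ->
  (forall i j, (i <= j < N)%N -> X i j.+1 = Y j i) ->
  (forall i j, (j < i <= N)%N -> X i.+1 j = Y j i) ->
  \sum_(0 <= i < N.+2) \sum_(0 <= j < N.+1) X i j *~ (-1) ^+ (i + j) +
  \sum_(0 <= j < N) \sum_(0 <= i < N.+1) Y j i *~ (-1) ^+ (i + j) = 0.
Proof.
elim: N => [|m IHm] X_diag X_lt X_gt.
  rewrite [X in _ + X]big_geq // addr0 big_nat_recr //= !big_nat1 X_diag //.
  by rewrite mulrz_signS addrN.
rewrite (big_nat_recr m.+2) //= (big_nat_recr m 0 (fun j => \sum_(0 <= i < m.+2) _)) //=.
under eq_bigr => i _ do rewrite (big_nat_recr m.+1) //=.
under [X in _ + (X + _)]eq_bigr => i _ do rewrite (big_nat_recr m.+1) //=.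
rewrite !big_split /=.
set A := \sum_(0 <= i < m.+2) \sum_(0 <= j < m.+1) _.
set D := \sum_(0 <= i < m) \sum_(0 <= j < m.+1) _.
set B := \sum_(0 <= i < m.+2) X i m.+1 *~ _.
set C := \sum_(0 <= j < m.+2) X m.+2 j *~ _.
set E := \sum_(0 <= i < m) Y i m.+1 *~ _.
set F := \sum_(0 <= i < m.+2) Y m i *~ _.
set x := X m.+1 m.+1 *~ (-1) ^+ (m.+1 + m.+1).
set y := Y m m.+1 *~ (-1) ^+ (m.+1 + m).
have AD0 : A + D = 0 by apply: IHm => [i|i j|i j] ?; [apply: X_diag|apply: X_lt|apply: X_gt]; lia.
have BF : B + F = x + y.
  rewrite /B /F (big_nat_recr m.+1) //= (big_nat_recr m.+1) //=.
  have -> : \sum_(0 <= i < m.+1) X i m.+1 *~ (-1) ^+ (i + m.+1) =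
            - \sum_(0 <= i < m.+1) Y m i *~ (-1) ^+ (i + m).
    rewrite -sumrN; apply: eq_big_nat => i i_lt.
    by rewrite X_lt ?addnS ?mulrz_signS //; lia.
  by rewrite addrACA addNr add0r.
have CE : C + E = - (x + y).
  rewrite /C (big_nat_recr m.+1) //= (big_nat_recr m) //=.
  have -> : \sum_(0 <= j < m) X m.+2 j *~ (-1) ^+ (m.+2 + j) = - E.
    rewrite /E -sumrN; apply: eq_big_nat => j j_lt.
    by rewrite X_gt ?addSn ?mulrz_signS //; lia.
  rewrite (X_gt m.+1 m) -?(X_diag m.+1) ?leqnn //.
  rewrite [(m.+2 + m)%N]addSn mulrz_signS [(m.+2 + m.+1)%N]addSn mulrz_signS.
  by rewrite -/x -/y (addrC _ E) !addrA addrN add0r opprD addrC.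
by rewrite addrACA (addrACA A) AD0 add0r (addrC C F) addrACA (addrC E C) BF CE addrN.
Qed.

End SignedSums.

Section Duplicial.
Variables (C : preadditive) (M : duplicial C).

Lemma act_hcomp l m n f g : is_lam l m f -> is_lam m n g ->
  hcomp (act M l m f) (act M m n g) = act M l n (g \o f).
Proof. by move=> f_lam g_lam; rewrite (act_comp M f_lam g_lam). Qed.

Ltac act_lam := rewrite /face /degen !act_hcomp;
  try apply: is_lam_eps; try apply: is_lam_eta.

Lemma face_face n i j : (i <= j <= n.+1)%N ->
  hcomp (face M n i) (face M n.+1 j.+1) = hcomp (face M n j) (face M n.+1 i).
Proof. by move=> ?; act_lam; rewrite eps_eps. Qed.

Lemma degen_degen n i j : (i <= j <= n.+1)%N ->
  hcomp (degen M n.+1 j.+1) (degen M n i) = hcomp (degen M n.+1 i) (degen M n j).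
Proof. by move=> ?; act_lam; rewrite eta_eta. Qed.

Lemma face_degen_id n j : (j <= n.+1)%N -> hcomp (face M n j) (degen M n j) = idm _.
Proof. by move=> ?; act_lam; rewrite eta_eps_id ?act_id. Qed.

Lemma faceS_degen_id n j : (j <= n)%N -> hcomp (face M n j.+1) (degen M n j) = idm _.
Proof. by move=> ?; act_lam; rewrite eta_epsS_id ?act_id. Qed.

Lemma face_degen_le n i j : (i <= j <= n.+1)%N -> ~~ ((i == 0) && (j == n.+1))%N ->
  hcomp (face M n.+1 i) (degen M n.+1 j.+1) = hcomp (degen M n j) (face M n i).
Proof. by move=> ? ?; act_lam; rewrite eta_eps_le. Qed.

Lemma face_degen_gt n i j : (j < i <= n.+1)%N ->
  hcomp (face M n.+1 i.+1) (degen M n.+1 j) = hcomp (degen M n j) (face M n i).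
Proof. by move=> ?; act_lam; rewrite eta_eps_gt. Qed.

Lemma kappaS n : kappa M n.+1 = (hcomp (face M n.+1 0) (degen M n.+1 n.+2)
  - hcomp (degen M n n.+1) (face M n 0)) *~ (-1) ^+ n.+1.
Proof. by []. Qed.

Lemma kappa_degen0 n : hcomp (kappa M n.+1) (degen M n 0) = 0.
Proof.
rewrite kappaS hcompMzl hcompBl.
have -> : hcomp (hcomp (face M n.+1 0) (degen M n.+1 n.+2)) (degen M n 0) = degen M n n.+1.
  by rewrite -hcompA (@degen_degen n 0 n.+1 ltac:(lia)) hcompA face_degen_id // hcomp1m.
have -> : hcomp (hcomp (degen M n n.+1) (face M n 0)) (degen M n 0) = degen M n n.+1.
  by rewrite -hcompA face_degen_id // hcompm1.
by rewrite subrr mul0rz.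
Qed.

Lemma face_last_kappa n : hcomp (face M n n.+1) (kappa M n.+1) = 0.
Proof.
rewrite kappaS hcompMzr hcompBr.
have -> : hcomp (face M n n.+1) (hcomp (face M n.+1 0) (degen M n.+1 n.+2)) = face M n 0.
  by rewrite hcompA -(@face_face n 0 n.+1 ltac:(lia)) -hcompA face_degen_id // hcompm1.
have -> : hcomp (face M n n.+1) (hcomp (degen M n n.+1) (face M n 0)) = face M n 0.
  by rewrite hcompA face_degen_id // hcomp1m.
by rewrite subrr mul0rz.
Qed.

Lemma face_kappa n i : (i <= n)%N ->
  hcomp (face M n.+1 i.+1) (kappa M n.+2) = - hcomp (kappa M n.+1) (face M n.+1 i.+2).
Proof.
move=> le_in; rewrite !kappaS hcompMzr hcompMzl hcompBr hcompBl mulrz_signS.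
have -> : hcomp (face M n.+1 i.+1) (hcomp (face M n.+2 0) (degen M n.+2 n.+3)) =
   hcomp (hcomp (face M n.+1 0) (degen M n.+1 n.+2)) (face M n.+1 i.+2).
  rewrite hcompA -(@face_face n.+1 0 i.+1 ltac:(lia)) -hcompA.
  by rewrite (@face_degen_le n.+1 i.+2 n.+2 ltac:(lia) ltac:(lia)) hcompA.
have -> : hcomp (face M n.+1 i.+1) (hcomp (degen M n.+1 n.+2) (face M n.+1 0)) =
   hcomp (hcomp (degen M n n.+1) (face M n 0)) (face M n.+1 i.+2).
  rewrite hcompA (@face_degen_le n i.+1 n.+1 ltac:(lia) ltac:(lia)).
  by rewrite -hcompA -(@face_face n 0 i.+1 ltac:(lia)) hcompA.
by [].
Qed.

Lemma kappa_degen n j : (j <= n)%N ->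
  hcomp (kappa M n.+2) (degen M n.+1 j.+1) = - hcomp (degen M n.+1 j) (kappa M n.+1).
Proof.
move=> le_jn; rewrite !kappaS hcompMzr hcompMzl hcompBr hcompBl mulrz_signS.
have -> : hcomp (hcomp (face M n.+2 0) (degen M n.+2 n.+3)) (degen M n.+1 j.+1) =
   hcomp (degen M n.+1 j) (hcomp (face M n.+1 0) (degen M n.+1 n.+2)).
  rewrite -hcompA (@degen_degen n.+1 j.+1 n.+2 ltac:(lia)).
  by rewrite hcompA (@face_degen_le n.+1 0 j ltac:(lia) ltac:(lia)) -hcompA.
have -> : hcomp (hcomp (degen M n.+1 n.+2) (face M n.+1 0)) (degen M n.+1 j.+1) =
   hcomp (degen M n.+1 j) (hcomp (degen M n n.+1) (face M n 0)).
  rewrite -hcompA (@face_degen_le n 0 j ltac:(lia) ltac:(lia)).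
  by rewrite hcompA (@degen_degen n j n.+1 ltac:(lia)) -hcompA.
by [].
Qed.

Lemma kappa_pow0 n : kappa_pow M n 0 = idm _.
Proof. by []. Qed.

Lemma kappa_powS n k : kappa_pow M n k.+1 = hcomp (kappa M n) (kappa_pow M n k).
Proof. by []. Qed.

Lemma kappa_powSr n k : kappa_pow M n k.+1 = hcomp (kappa_pow M n k) (kappa M n).
Proof.
elim: k => [|k IHk]; first by rewrite kappa_powS kappa_pow0 hcompm1 hcomp1m.
by rewrite kappa_powS [in LHS]IHk hcompA -kappa_powS.
Qed.

Lemma face_kappa_pow n k i : (1 <= i)%N -> (i + k <= n.+1)%N ->
  hcomp (face M n i) (kappa_pow M n.+1 k) =
  hcomp (kappa_pow M n k) (face M n (i + k)) *~ (-1) ^+ k.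
Proof.
elim: k i => [|k IHk] [|i] i_ge1 le_ikn //.
  by rewrite kappa_pow0 hcompm1 hcomp1m addn0 expr0 mulr1z.
case: n IHk le_ikn => [|n] IHk le_ikn; first by lia.
rewrite kappa_powS hcompA (face_kappa (_ : i <= n)%N); last by lia.
rewrite hcompNl -hcompA (IHk i.+2) ?hcompMzr ?hcompA -?kappa_powS ?mulrz_signS ?addSnnS //; lia.
Qed.

Lemma face_kappa_pow_eq0 n k i : (1 <= i <= n.+1)%N -> (n.+2 <= i + k)%N ->
  hcomp (face M n i) (kappa_pow M n.+1 k) = 0.
Proof.
elim: k i => [|k IHk] i i_rng le_nik; first by lia.
rewrite kappa_powS hcompA.
have [->|ne_in] := eqVneq i n.+1; first by rewrite face_last_kappa hcomp0l.
case: n IHk i_rng le_nik ne_in => [|n] IHk i_rng le_nik ne_in; first by lia.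
case: i i_rng le_nik ne_in => [|i] i_rng le_nik ne_in; first by lia.
rewrite (face_kappa (_ : i <= n)%N); last by lia.
by rewrite hcompNl -hcompA (IHk i.+2) ?hcomp0r ?oppr0 //; lia.
Qed.

Lemma kappa_pow_degen n k j : (k <= j <= n)%N ->
  hcomp (kappa_pow M n.+1 k) (degen M n j) =
  hcomp (degen M n (j - k)) (kappa_pow M n k) *~ (-1) ^+ k.
Proof.
elim: k => [|k IHk] le_kjn.
  by rewrite kappa_pow0 hcompm1 hcomp1m subn0 expr0 mulr1z.
rewrite kappa_powS -hcompA IHk ?hcompMzr ?hcompA; last by lia.
case: n IHk le_kjn => [|n] IHk le_kjn; first by lia.
have -> : (j - k = (j - k.+1).+1)%N by lia.
rewrite (kappa_degen (_ : j - k.+1 <= n)%N); last by lia.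
by rewrite hcompNl -hcompA -kappa_powS mulrz_signS mulNrz.
Qed.

Lemma kappa_pow_degen_eq0 n k j : (j < k)%N -> (j <= n)%N ->
  hcomp (kappa_pow M n.+1 k) (degen M n j) = 0.
Proof.
elim: k => [|k IHk] lt_jk le_jn; first by lia.
rewrite kappa_powS -hcompA.
have [lt_jk'|] := ltnP j k; first by rewrite IHk ?hcomp0r.
move=> le_kj; have -> : j = k by lia.
by rewrite (@kappa_pow_degen n k k ltac:(lia)) subnn hcompMzr hcompA kappa_degen0 hcomp0l mul0rz.
Qed.

Lemma bndE n : bnd M n = \sum_(0 <= i < n.+2) face M n i *~ (-1) ^+ i.
Proof. by rewrite /bnd big_mkord. Qed.

Lemma ddE n : dd M n = \sum_(0 <= i < n.+2) degen M n i *~ (-1) ^+ i.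
Proof. by rewrite /dd big_mkord. Qed.

Lemma bnd_bnd n : hcomp (bnd M n) (bnd M n.+1) = 0.
Proof.
rewrite -[RHS](@signed_sum_simplicial_eq0 _ n.+1
  (fun i j => hcomp (face M n i) (face M n.+1 j))); last exact: face_face.
rewrite !bndE hcomp_suml; apply: eq_bigr => i _; rewrite hcompMzl hcomp_sumr mulrz_suml.
by apply: eq_bigr => j _; rewrite hcompMzr mulrz_signD addnC.
Qed.

Lemma dd_dd n : hcomp (dd M n.+1) (dd M n) = 0.
Proof.
rewrite -[RHS](@signed_sum_simplicial_eq0 _ n.+1
  (fun i j => hcomp (degen M n.+1 j) (degen M n i))); last exact: degen_degen.
rewrite !ddE hcomp_suml.
under eq_bigr => j _ do rewrite hcompMzl hcomp_sumr mulrz_suml.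
rewrite exchange_big_nat /=; apply: eq_bigr => i _; apply: eq_bigr => j _.
by rewrite hcompMzr mulrz_signD addnC.
Qed.

(* [d] without its last term [s_(n,n+1)]: the identity [face_0 s_(n+2) = s_(n+1) face_0]
   fails, and the defect is exactly [kappa]. *)
Definition dd_trunc n : Hom (ob M n) (ob M n.+1) :=
  \sum_(0 <= j < n.+1) degen M n j *~ (-1) ^+ j.

Lemma dd_truncE n : dd M n = dd_trunc n + degen M n n.+1 *~ (-1) ^+ n.+1.
Proof. by rewrite ddE big_nat_recr. Qed.

Lemma bnd_dd_trunc n :
  hcomp (bnd M n.+1) (dd_trunc n.+1) + hcomp (dd_trunc n) (bnd M n) = 0.
Proof.
rewrite -[RHS](@signed_sum_homotopy_eq0 _ n.+1
  (fun i j => hcomp (face M n.+1 i) (degen M n.+1 j))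
  (fun j i => hcomp (degen M n j) (face M n i))); first last.
- by move=> i j ?; exact: face_degen_gt.
- by move=> i j ?; apply: face_degen_le; lia.
- by move=> i ?; rewrite face_degen_id ?faceS_degen_id //; lia.
rewrite !bndE !hcomp_suml; congr (_ + _); apply: eq_bigr => i _.
  rewrite hcompMzl hcomp_sumr mulrz_suml; apply: eq_bigr => j _.
  by rewrite hcompMzr mulrz_signD.
rewrite hcompMzl hcomp_sumr mulrz_suml; apply: eq_bigr => j _.
by rewrite hcompMzr mulrz_signD addnC.
Qed.

Lemma bnd_degen_last n :
  hcomp (bnd M n.+1) (degen M n.+1 n.+2) =
  hcomp (face M n.+1 0) (degen M n.+1 n.+2) +
  \sum_(0 <= i < n.+1) hcomp (degen M n n.+1) (face M n i.+1) *~ (-1) ^+ i.+1 +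
  idm _ *~ (-1) ^+ n.+2.
Proof.
rewrite bndE hcomp_suml big_nat_recl //= big_nat_recr //= hcompMzl expr0 mulr1z addrA.
congr (_ + _ + _); last by rewrite hcompMzl face_degen_id.
by apply: eq_big_nat => i i_lt; rewrite hcompMzl face_degen_le //; lia.
Qed.

Lemma degen_last_bnd n :
  hcomp (degen M n n.+1) (bnd M n) =
  hcomp (degen M n n.+1) (face M n 0) +
  \sum_(0 <= i < n.+1) hcomp (degen M n n.+1) (face M n i.+1) *~ (-1) ^+ i.+1.
Proof.
rewrite bndE hcomp_sumr big_nat_recl //= hcompMzr expr0 mulr1z.
by congr (_ + _); apply: eq_bigr => i _; rewrite hcompMzr.
Qed.

Lemma bnd_dd_add n :
  hcomp (bnd M n.+1) (dd M n.+1) + hcomp (dd M n) (bnd M n) = idm _ - kappa M n.+1.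
Proof.
rewrite !dd_truncE hcompDr hcompDl hcompMzr hcompMzl addrACA bnd_dd_trunc add0r.
rewrite bnd_degen_last degen_last_bnd kappaS.
set t := hcomp (face M n.+1 0) _; set g := hcomp (degen M n n.+1) (face M n 0).
set S := \sum_(0 <= i < n.+1) _; set e := (-1) ^+ n.+1 : int.
rewrite (exprS _ n.+1) mulN1r -/e !mulrzDl !mulrNz mulNrz opprK mulrz_sign2.
rewrite mulNrz opprD opprK [g *~ e + _]addrC addrA (addrAC (- (t *~ e))) subrK.
by rewrite (addrC (- (t *~ e))) -addrA.
Qed.

Lemma bnd_dd0 : hcomp (bnd M 0) (dd M 0) = idm _ - kappa M 0.
Proof.
rewrite bndE ddE /index_iota /= !big_cons !big_nil !addr0.
rewrite !hcompDl !hcompDr !hcompMzl !hcompMzr.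
rewrite (@face_degen_id 0 0) // (@faceS_degen_id 0 0) // (@face_degen_id 0 1) //.
by rewrite expr0 expr1 !mulr1z !mulrN1z opprK addNr addr0.
Qed.

Lemma kappaE n : kappa M n.+1 =
  idm _ - (hcomp (bnd M n.+1) (dd M n.+1) + hcomp (dd M n) (bnd M n)).
Proof. by rewrite bnd_dd_add subKr. Qed.

Lemma kappa0E : kappa M 0 = idm _ - hcomp (bnd M 0) (dd M 0).
Proof. by rewrite bnd_dd0 subKr. Qed.

Lemma bnd_kappa n : hcomp (bnd M n) (kappa M n.+1) = hcomp (kappa M n) (bnd M n).
Proof.
rewrite kappaE hcompBr hcompm1 hcompDr !hcompA bnd_bnd hcomp0l add0r.
case: n => [|n]; first by rewrite kappa0E hcompBl hcomp1m.
by rewrite kappaE hcompBl hcomp1m hcompDl -(hcompA (dd M n)) bnd_bnd hcomp0r addr0.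
Qed.

Lemma dd_kappa n : hcomp (dd M n) (kappa M n) = hcomp (kappa M n.+1) (dd M n).
Proof.
rewrite kappaE hcompBl hcomp1m hcompDl -(hcompA (bnd M n.+1)) dd_dd hcomp0r add0r.
case: n => [|n]; first by rewrite kappa0E hcompBr hcompm1 !hcompA.
by rewrite kappaE hcompBr hcompm1 hcompDr !hcompA dd_dd hcomp0l addr0.
Qed.

Lemma bnd_kappa_pow n k :
  hcomp (bnd M n) (kappa_pow M n.+1 k) = hcomp (kappa_pow M n k) (bnd M n).
Proof.
elim: k => [|k IHk]; first by rewrite !kappa_pow0 hcompm1 hcomp1m.
by rewrite !kappa_powS hcompA bnd_kappa -hcompA IHk hcompA.
Qed.

Lemma dd_kappa_pow n k :
  hcomp (dd M n) (kappa_pow M n k) = hcomp (kappa_pow M n.+1 k) (dd M n).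
Proof.
elim: k => [|k IHk]; first by rewrite !kappa_pow0 hcompm1 hcomp1m.
by rewrite !kappa_powS hcompA dd_kappa -hcompA IHk hcompA.
Qed.

Lemma kappa_pow_dd n : hcomp (kappa_pow M n.+1 n) (dd M n) =
  hcomp (kappa_pow M n.+1 n) (degen M n n) *~ (-1) ^+ n +
  hcomp (kappa_pow M n.+1 n) (degen M n n.+1) *~ (-1) ^+ n.+1.
Proof.
rewrite ddE hcomp_sumr (big_nat_recr n.+1) // (big_nat_recr n) //= !hcompMzr.
rewrite big_nat_cond big1 ?add0r // => j /andP[/andP[_ lt_jn] _].
by rewrite hcompMzr kappa_pow_degen_eq0 ?mul0rz //; lia.
Qed.

Lemma face0_kappa_pow_dd n :
  hcomp (face M n 0) (hcomp (kappa_pow M n.+1 n) (dd M n)) = kappa_pow M n n - dk_pi M n.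
Proof.
rewrite kappa_pow_dd hcompDr !hcompMzr (@kappa_pow_degen n n n ltac:(lia)) subnn.
rewrite hcompMzr hcompA face_degen_id // hcomp1m mulrz_sign2.
by rewrite /dk_pi mulrz_signS -mulNrz.
Qed.

Lemma face_kappa_pow_dd n i : (1 <= i <= n.+1)%N ->
  hcomp (face M n i) (hcomp (kappa_pow M n.+1 n) (dd M n)) = 0.
Proof.
case: i => [//|[|i]] i_rng; last first.
  by rewrite hcompA (@face_kappa_pow_eq0 n n i.+2) ?hcomp0l //; lia.
rewrite kappa_pow_dd hcompDr !hcompMzr !hcompA (@face_kappa_pow n n 1 isT ltac:(lia)).
rewrite !hcompMzl -!hcompA add1n faceS_degen_id // face_degen_id // !hcompm1 mulrz_sign2.
by rewrite mulrz_signS mulrz_sign2 addrN.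
Qed.

Lemma dk_piE n :
  dk_pi M n = kappa_pow M n n - hcomp (bnd M n) (hcomp (kappa_pow M n.+1 n) (dd M n)).
Proof.
rewrite bndE hcomp_suml big_nat_recl // big_nat_cond big1 => [|i /andP[i_lt _]].
  by rewrite addr0 hcompMzl expr0 mulr1z face0_kappa_pow_dd subKr.
by rewrite hcompMzl face_kappa_pow_dd ?mul0rz //; lia.
Qed.

Lemma dd_bnd n : hcomp (dd M n) (bnd M n) =
  idm _ - kappa M n.+1 - hcomp (bnd M n.+1) (dd M n.+1).
Proof. by rewrite -bnd_dd_add addrC addKr. Qed.

Lemma bnd_dk_pi n : hcomp (bnd M n) (dk_pi M n.+1) = hcomp (kappa_pow M n n.+1) (bnd M n).
Proof. by rewrite dk_piE hcompBr hcompA bnd_bnd hcomp0l subr0 bnd_kappa_pow. Qed.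

Lemma dk_pi_bnd n : hcomp (dk_pi M n) (bnd M n) = hcomp (kappa_pow M n n.+1) (bnd M n).
Proof.
have bnd_bnd_dd : hcomp (bnd M n)
    (hcomp (kappa_pow M n.+1 n) (hcomp (bnd M n.+1) (dd M n.+1))) = 0.
  by rewrite (hcompA (kappa_pow _ _ _)) -bnd_kappa_pow !hcompA bnd_bnd !hcomp0l.
(* [set] keeps [-!hcompA] from unfolding [kappa_pow] on the right. *)
set rhs := RHS; rewrite dk_piE hcompBl -!hcompA dd_bnd !hcompBr hcompm1 bnd_bnd_dd subr0.
by rewrite -kappa_powSr !bnd_kappa_pow subKr.
Qed.

Lemma dd_dk_pi n : hcomp (dd M n) (dk_pi M n) = hcomp (kappa_pow M n.+1 n.+1) (dd M n).
Proof.
rewrite dk_piE hcompBr dd_kappa_pow hcompA dd_bnd !hcompBl hcomp1m.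
rewrite -hcompA (hcompA (dd M n.+1)) dd_kappa_pow -(hcompA (kappa_pow M n.+2 n)) dd_dd.
by rewrite !hcomp0r subr0 hcompA -kappa_powS subKr.
Qed.

Lemma dk_pi_dd n : hcomp (dk_pi M n.+1) (dd M n) = hcomp (kappa_pow M n.+1 n.+1) (dd M n).
Proof. by rewrite dk_piE hcompBl -!hcompA dd_dd !hcomp0r subr0. Qed.

End Duplicial.

Theorem mainTheorem16 (C : preadditive) (M : duplicial C) :
  (forall n : nat, hcomp (bnd M n) (dk_pi M n.+1) = hcomp (dk_pi M n) (bnd M n)) /\
  (forall n : nat, hcomp (dd M n) (dk_pi M n) = hcomp (dk_pi M n.+1) (dd M n)).
Proof.
by split=> n; [rewrite bnd_dk_pi dk_pi_bnd | rewrite dd_dk_pi dk_pi_dd].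
Qed.
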